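(* Let $W_{max}$ be the maximum weight assigned to a vertex. The population size of DEMO on the weighted vertex cover problem is at all times upper bounded by $O\big(n(\log n+\log W_{max})\big)$.
   Context: Weighted vertex cover: $G=(V,E)$, $V=\{v_1,\dots,v_n\}$, $w:V\to\mathbb{N}^+$. Search points $x\in\{0,1\}^n$; $Cost(x)=\sum_i w(v_i)x_i$; $G(x)=(V(x),E(x))$ with $V(x)=V\setminus\{v_i:x_i=1\}$, $E(x)$ = edges with no selected endpoint; $LP(x)$ = optimal value of: minimize $\sum_{v_i\in V(x)}w(v_i)y_i$ s.t. $y_i+y_j\ge1$ for $\{v_i,v_j\}\in E(x)$, $0\le y_i\le1$. $f(x)=(Cost(x),LP(x))$, $f(x)\le f(y)$ componentwise. DEMO: $\delta=\frac1{2n}$, $b_1(x)=\lceil\log_{1+\delta}(1+Cost(x))\rceil$, $b_2(x)=\lceil\log_{1+\delta}(1+LP(x))\rceil$, $b=(b_1,b_2)$. Start with uniformly random $x$, $P=\{x\}$. Each iteration: choose $x\in P$ uniformly; create $x'$ by flipping each bit independently with probability $1/n$; if some $y\in P$ satisfies ($f(y)\le f(x')$ and $f(y)\ne f(x')$) or ($b(y)=b(x')$ and $Cost(y)+2LP(y)\le Cost(x')+2LP(x')$), discard $x'$; otherwise add $x'$ and delete all other $z\in P$ with $f(x')\le f(z)$ or $b(z)=b(x')$. *)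

From HB Require Import structures.
From mathcomp Require Import all_boot all_order all_algebra.
From mathcomp Require Import all_classical all_reals.
From mathcomp Require Import exp.
Set Implicit Arguments. Unset Strict Implicit. Unset Printing Implicit Defensive.
Import Order.TTheory GRing.Theory Num.Theory.
Local Open Scope classical_set_scope.
Local Open Scope ring_scope.

Section DEMO.
Variables (R : realType) (n : nat).
(* graph on vertex set 'I_n given by an edge relation e (assumed symmetric,
   irreflexive in the theorem); vertex weights w *)
Variables (e : rel 'I_n) (w : 'I_n -> nat).

Definition bits := {ffun 'I_n -> bool}.

Definition Cost (x : bits) : nat := (\sum_(i < n) w i * x i)%N.

Definition inVx (x : bits) (i : 'I_n) : bool := ~~ x i.
Definition inEx (x : bits) (i j : 'I_n) : bool := [&& e i j, ~~ x i & ~~ x j].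

Definition LP_feasible (x : bits) (y : 'I_n -> R) : Prop :=
  (forall i, inVx x i -> 0 <= y i <= 1) /\
  (forall i j, inEx x i j -> 1 <= y i + y j).

Definition LP_obj (x : bits) (y : 'I_n -> R) : R :=
  \sum_(i < n | inVx x i) (w i)%:R * y i.

(* LP(x) = optimal value of the LP relaxation (minimum = infimum) *)
Definition LP (x : bits) : R :=
  inf [set s | exists y, LP_feasible x y /\ s = LP_obj x y].

Definition fle (y x : bits) : bool :=
  ((Cost y)%:R <= (Cost x)%:R :> R) && (LP y <= LP x).

Definition fdom (y x : bits) : bool :=
  fle y x && ~~ (((Cost y)%:R == (Cost x)%:R :> R) && (LP y == LP x)).

Definition delta : R := (2 * n%:R)^-1.

Definition boxidx (v : R) : int := Num.ceil (ln (1 + v) / ln (1 + delta)).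

Definition b (x : bits) : int * int :=
  (boxidx (Cost x)%:R, boxidx (LP x)).

Definition sc (x : bits) : R := (Cost x)%:R + 2 * LP x.

Definition demo_step (P : {set bits}) (x' : bits) : {set bits} :=
  if [exists y in P, fdom y x' || ((b y == b x') && (sc y <= sc x'))]
  then P
  else x' |: [set z in P | ~~ (fle x' z || (b z == b x'))].

(* populations reachable (with positive probability) by DEMO: the initial
   population is any singleton, and every offspring x' of a parent in P has
   positive probability (standard bit mutation with rate 1/n, n >= 2). *)
Inductive reachable : {set bits} -> Prop :=
| reach_init (x : bits) : reachable [set x]
| reach_step (P : {set bits}) (x x' : bits) :
    reachable P -> x \in P -> reachable (demo_step P x').

Definition Wmax : nat := (\max_(i < n) w i)%N.

End DEMO.

(** DEMO only keeps points that are pairwise incomparable under the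
    componentwise order on (Cost, LP) and that lie in pairwise distinct boxes.
    Of two incomparable points, the cheaper one has the larger LP value, so its
    box lies weakly left of and weakly above the other box; their box indices
    therefore cannot have the same difference b1 - b2 unless the boxes coincide.
    Hence b1 - b2 is injective on the population.  Both box indices range over
    [0, M] with M = ceil(log_{1+delta}(1 + n Wmax)) = O(n (log n + log Wmax)),
    which bounds the population size by 2M + 1. *)
From HB Require Import structures.
From mathcomp Require Import all_boot all_order all_algebra.
From mathcomp Require Import all_classical all_reals.
From mathcomp Require Import exp zify ring lra.
Set Implicit Arguments. Unset Strict Implicit. Unset Printing Implicit Defensive.
Import Order.TTheory GRing.Theory Num.Theory.
Local Open Scope ring_scope.

Section Population.
Variables (R : realType) (n : nat) (e : rel 'I_n) (w : 'I_n -> nat).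

Lemma reachable_incomparable (P : {set bits n}) : reachable R e w P ->
  {in P &, forall y z, y != z -> ~~ fle R e w y z && (b R e w y != b R e w z)}.
Proof.
elim=> [x|Q x x' _ IH _] y z.
  by rewrite !finset.in_set1 => /eqP -> /eqP ->; rewrite eqxx.
rewrite /demo_step; case: ifP => [_|accepted]; first exact: IH.
move/negbT/existsPn: accepted => accepted.
have not_fle_x' u : u \in Q -> ~~ fle R e w x' u -> ~~ fle R e w u x'.
  move=> uQ nfle; apply/negP => fle_u.
  move: (accepted u); rewrite uQ /= negb_or => /andP[+ _].
  rewrite /fdom fle_u /= negbK => /andP[/eqP eqC /eqP eqLP].
  by move: nfle; rewrite /fle eqC eqLP !lexx.
rewrite !finset.in_setU1 !finset.in_set.
case: (eqVneq y x') => [->|yx']; case: (eqVneq z x') => [->|zx'] //=.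
- by move=> _ /andP[_ /norP[nfle nb]] _; rewrite nfle eq_sym nb.
- by move=> /andP[yQ /norP[nfle nb]] _ _; rewrite (not_fle_x' y yQ nfle) nb.
- by move=> /andP[yQ _] /andP[zQ _]; apply: IH.
Qed.

Lemma Cost_le_Wmax (x : bits n) : (Cost w x <= n * Wmax w)%N.
Proof.
rewrite /Cost -[X in (_ <= X * _)%N]card_ord -sum_nat_const.
apply: leq_sum => i _; have := leq_bigmax (F := w) i.
by case: (x i); rewrite ?muln1 ?muln0.
Qed.

Let LP_values (x : bits n) :=
  [set s : R | exists y, LP_feasible e x y /\ s = LP_obj w x y]%classic.

Lemma LP_values_one (x : bits n) : LP_values x (LP_obj w x (fun _ => 1)).
Proof.
exists (fun _ => 1); split => //; split => [i _|i j _].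
  by rewrite ler01 lexx.
by rewrite lerDl ler01.
Qed.

Lemma LP_values_ge0 (x : bits n) : lbound (LP_values x) 0.
Proof.
move=> s [y [[y01 _] ->]]; apply: sumr_ge0 => i Vi.
by apply: mulr_ge0 => //; case/andP: (y01 i Vi).
Qed.

Lemma LP_ge0 (x : bits n) : 0 <= LP R e w x.
Proof.
apply: lb_le_inf; last exact: LP_values_ge0.
by exists (LP_obj w x (fun _ => 1)); apply: LP_values_one.
Qed.

Lemma LP_le_Wmax (x : bits n) : LP R e w x <= (n * Wmax w)%:R.
Proof.
apply: le_trans (ge_inf _ (LP_values_one x)) _.
  by exists 0; apply: LP_values_ge0.
rewrite /LP_obj big_mkcond /= natrM mulrC mulr_natr.
rewrite -[X in _ *+ X]card_ord -sumr_const.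
apply: ler_sum => i _; case: ifP => _; last by rewrite ler0n.
by rewrite mulr1 ler_nat; apply: (leq_bigmax (F := w) i).
Qed.

End Population.

Lemma ln1D_ge (R : realType) (d : R) : 0 < d -> d / (1 + d) <= ln (1 + d).
Proof.
move=> d0; have d1 : 0 < 1 + d by lra.
have inv1D : (1 + d)^-1 = 1 + - (d / (1 + d)) by field; lra.
have lnV1D : ln (1 + - (d / (1 + d))) = - ln (1 + d).
  by rewrite -inv1D lnV ?posrE.
have : ln (1 + - (d / (1 + d))) <= - (d / (1 + d)).
  by apply: le_ln1Dx; rewrite ltrN2 ltr_pdivrMr // mul1r; lra.
by rewrite lnV1D; lra.
Qed.

Section Boxes.
Variables (R : realType) (n : nat).
Hypothesis n_gt0 : (0 < n)%N.

Lemma ln1Ddelta_ge : (2 * n%:R + 1)^-1 <= ln (1 + delta R n).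
Proof.
have n0 : 0 < n%:R :> R by rewrite ltr0n.
have delta_gt0 : 0 < delta R n by rewrite /delta invr_gt0; lra.
have -> : (2 * n%:R + 1)^-1 = delta R n / (1 + delta R n).
  by rewrite /delta; field; lra.
exact: ln1D_ge.
Qed.

Lemma ln1Ddelta_gt0 : 0 < ln (1 + delta R n).
Proof.
have n0 : 0 <= n%:R :> R := ler0n R n.
by apply: (lt_le_trans _ ln1Ddelta_ge); rewrite invr_gt0; lra.
Qed.

Lemma le_boxidx (u v : R) : 0 <= u -> u <= v -> boxidx n u <= boxidx n v.
Proof.
move=> u0 uv; apply: le_ceil; apply: ler_wpM2r.
  by rewrite invr_ge0 ltW // ln1Ddelta_gt0.
by rewrite ler_ln ?posrE; lra.
Qed.

Lemma boxidx_ge0 (v : R) : 0 <= v -> 0 <= boxidx n v.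
Proof.
move=> v0; rewrite /boxidx ceil_ge0; apply: lt_le_trans (_ : 0 <= _); first lra.
apply: divr_ge0; first by apply: ln_ge0; lra.
exact/ltW/ln1Ddelta_gt0.
Qed.

Lemma boxidx_lt (v : R) : 0 <= v ->
  (boxidx n v)%:~R < (2 * n%:R + 1) * ln (1 + v) + 1.
Proof.
move=> v0; have ln1Dv_ge0 : 0 <= ln (1 + v) by apply: ln_ge0; lra.
have inv_le : (ln (1 + delta R n))^-1 <= 2 * n%:R + 1.
  rewrite -[X in _ <= X]invrK lef_pV2 ?posrE ?ln1Ddelta_gt0 ?ln1Ddelta_ge //.
  by rewrite invr_gt0; have := ler0n R n; lra.
have := ceilB1_lt (ln (1 + v) / ln (1 + delta R n)); rewrite intrB.
have : ln (1 + v) / ln (1 + delta R n) <= (2 * n%:R + 1) * ln (1 + v).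
  by rewrite mulrC ler_wpM2r.
by rewrite -/(boxidx n v); lra.
Qed.

End Boxes.

Lemma eq_pair_of_eq_sub (p q : int * int) :
  p.1 <= q.1 -> q.2 <= p.2 -> p.1 - p.2 = q.1 - q.2 -> p = q.
Proof. by case: p q => [a c] [d f] /= *; congr pair; lia. Qed.

Section Diagonal.
Variables (R : realType) (n : nat) (e : rel 'I_n) (w : 'I_n -> nat).
Hypothesis n_gt0 : (0 < n)%N.

Definition box_diagonal (y : bits n) : int := (b R e w y).1 - (b R e w y).2.

Lemma eq_box_of_diagonal (y z : bits n) :
  (Cost w y)%:R <= (Cost w z)%:R :> R -> ~~ fle R e w y z ->
  box_diagonal y = box_diagonal z -> b R e w y = b R e w z.
Proof.
move=> Cyz; rewrite /fle Cyz /= -ltNge => /ltW LPzy /eq_pair_of_eq_sub.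
apply; rewrite /b /=.
  by apply: le_boxidx; rewrite ?ler0n.
by apply: le_boxidx; rewrite ?LP_ge0.
Qed.

Lemma box_diagonal_inj (P : {set bits n}) :
  reachable R e w P -> {in P &, injective box_diagonal}.
Proof.
move=> reP y z yP zP eq_diag; apply/eqP; apply: contraT => yz.
have zy : z != y by rewrite eq_sym.
have /andP[nfle_yz nb_yz] := reachable_incomparable reP yP zP yz.
have /andP[nfle_zy nb_zy] := reachable_incomparable reP zP yP zy.
case/orP: (le_total ((Cost w y)%:R : R) (Cost w z)%:R) => Cyz.
- by move: nb_yz; rewrite (eq_box_of_diagonal Cyz nfle_yz eq_diag) eqxx.
- by move: nb_zy; rewrite (eq_box_of_diagonal Cyz nfle_zy (esym eq_diag)) eqxx.
Qed.

Lemma box_diagonal_bounded (y : bits n) :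
  `|box_diagonal y| <= boxidx n ((n * Wmax w)%N%:R : R).
Proof.
have b1 : 0 <= (b R e w y).1 <= boxidx n ((n * Wmax w)%N%:R : R).
  rewrite /= boxidx_ge0 //= le_boxidx //; by rewrite ler_nat Cost_le_Wmax.
have b2 : 0 <= (b R e w y).2 <= boxidx n ((n * Wmax w)%N%:R : R).
  by rewrite /= boxidx_ge0 ?LP_ge0 //= le_boxidx ?LP_ge0 ?LP_le_Wmax.
by move: b1 b2; rewrite /box_diagonal; case: (b R e w y) => u v /=; lia.
Qed.

End Diagonal.

Lemma card_le_int_bounded_inj (T : finType) (A : {set T}) (f : T -> int) (M : int) :
  {in A &, injective f} -> (forall x, `|f x| <= M) ->
  (#|A| <= 2 * `|M| + 1)%N.
Proof.
move=> f_inj f_bd; pose g x : 'I_(2 * `|M|).+1 := inord `|f x + M|.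
have g_inj : {in A &, injective g}.
  move=> x y xA yA /(congr1 val) /=; rewrite !inordK; last 2 first.
  - by have := f_bd y; lia.
  - by have := f_bd x; lia.
  by move=> gxy; apply: f_inj => //; have := f_bd x; have := f_bd y; lia.
rewrite -(card_in_imset g_inj) addn1.
by apply: leq_trans (max_card _) _; rewrite card_ord.
Qed.

Lemma ln2_ge (R : realType) : 1 / 2 <= ln (2 : R).
Proof. by have := @ln1D_ge R 1 ltr01; rewrite (_ : 1 + 1 = 2 :> R). Qed.

Lemma box_count_le (R : realType) (n W : nat) : (1 < n)%N -> (0 < W)%N ->
  (2 * `|boxidx n ((n * W)%N%:R : R)| + 1)%N%:R
    <= 13 * n%:R * (ln (n%:R : R) + ln (W%:R : R)).
Proof.
move=> n1 W0; set M := boxidx n _; rewrite natrD natrM.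
have n0 : (0 < n)%N by apply: ltn_trans n1.
have n2 : 2 <= n%:R :> R by rewrite ler_nat.
have W1 : 1 <= W%:R :> R by rewrite ler1n.
have M0 : 0 <= M by apply: boxidx_ge0 => //; apply: ler0n.
have absM : `|M|%:R = M%:~R :> R by rewrite natr_absz ger0_norm // ler0z.
set S := ln (n%:R : R) + ln (W%:R : R).
have lnW0 : 0 <= ln (W%:R : R) by apply: ln_ge0.
have ln2n : ln 2 <= ln (n%:R : R) by rewrite ler_ln ?posrE; lra.
have S_ge : 1 / 2 <= S by have := ln2_ge R; rewrite /S; lra.
have lnnW_le : ln (1 + (n * W)%N%:R) <= 2 * S.
  have : ln (1 + (n * W)%N%:R) <= ln 2 + S.
    rewrite /S -!lnM ?posrE ?natrM ?ler_ln ?posrE; try lra; nra.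
  by have := ln2n; rewrite /S; lra.
have := boxidx_lt n0 (ler0n R (n * W)); rewrite -/M -absM => M_lt.
have : (2 * n%:R + 1) * ln (1 + (n * W)%N%:R) <= (2 * n%:R + 1) * (2 * S).
  by apply: ler_wpM2l => //; lra.
(* 2 (2n + 1) 2S + 3 = 8nS + 4S + 3 <= 13nS since 4S <= 2nS and 3 <= 6S <= 3nS. *)
have : 0 <= (n%:R - 2) * S by apply: mulr_ge0; lra.
have : 0 <= (n%:R - 2) * (S - 1 / 2) by apply: mulr_ge0; lra.
nra.
Qed.

Theorem lemma6 (R : realType) :
  exists C : R, 0 < C /\
  forall (n : nat) (e : rel 'I_n) (w : 'I_n -> nat),
    (1 < n)%N ->
    (forall i j, e i j = e j i) ->
    (forall i, ~~ e i i) ->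
    (forall i, (0 < w i)%N) ->
    forall P : {set bits n}, reachable R e w P ->
      (#|P|%:R : R) <= C * n%:R * (ln (n%:R : R) + ln ((Wmax w)%:R : R)).
Proof.
exists 13; split; first lra.
move=> n e w n1 _ _ w_gt0 P reP.
have n0 : (0 < n)%N by apply: ltn_trans n1.
have W0 : (0 < Wmax w)%N := leq_trans (w_gt0 (Ordinal n0)) (leq_bigmax _).
apply: (le_trans _ (box_count_le R n1 W0)).
rewrite ler_nat; apply: card_le_int_bounded_inj (box_diagonal_inj n0 reP) _.
exact: box_diagonal_bounded.
Qed.
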